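(* Let $X,Y$ be $n\times n$ positive semidefinite complex matrices and let $Q$ be an $n\times n$ complex matrix with operator norm $\|Q\|_\infty\le 1$. Then for every $t\in(0,\infty)$, \[ 4\,|\operatorname{tr}(QXY)|\le t\,\operatorname{tr}(X^2+Y^2)+\frac{1}{t}\operatorname{tr}(XY+YX). \]
   Context: $\|Q\|_\infty$ denotes the operator (spectral) norm, i.e. the largest singular value of $Q$; $\operatorname{tr}$ denotes the trace. *)

(* Complex numbers: any numClosedFieldType C (e.g. algC, or
   complex R for R : rcfType); conjugation is conjC (z^* ). *)
From HB Require Import structures.
From mathcomp Require Import all_boot all_order all_algebra.
Set Implicit Arguments. Unset Strict Implicit. Unset Printing Implicit Defensive.
Import Order.TTheory GRing.Theory Num.Theory.
Local Open Scope ring_scope.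

Section Defs.
Variable C : numClosedFieldType.

Definition adjmx (m n : nat) (A : 'M[C]_(m, n)) : 'M[C]_(n, m) :=
  (map_mx Num.conj A)^T.

Definition psdmx (n : nat) (A : 'M[C]_n) : Prop :=
  adjmx A = A /\ forall v : 'cV[C]_n, 0 <= (adjmx v *m A *m v) 0 0.

Definition sqnorm (n : nat) (v : 'cV[C]_n) : C :=
  \sum_(i < n) `|v i 0| ^+ 2.

Definition opnorm_le1 (n : nat) (Q : 'M[C]_n) : Prop :=
  forall v : 'cV[C]_n, sqnorm (Q *m v) <= sqnorm v.
End Defs.

(** Factor [X = A^* A] and [Y = B^* B].  Then [tr (Q X Y)] is the Frobenius
    inner product of [M = B Q A^*] and [N = B A^*], with [|N|^2 = tr (X Y)]
    and [|M|^2 = <Q^* Y, X Q^*> <= |Y| |X|] because [Q] and [Q^*] are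
    contractions.  Two applications of Cauchy-Schwarz and of the AM-GM
    inequality [2 sqrt (a b) <= a + b] give the bound. *)
From HB Require Import structures.
From mathcomp Require Import all_boot all_order all_algebra.
From mathcomp Require Import sesquilinear spectral.
Set Implicit Arguments.
Unset Strict Implicit.
Unset Printing Implicit Defensive.

Import Order.TTheory GRing.Theory Num.Theory Num.Def.
Local Open Scope ring_scope.

Lemma ler_AGM2_of_sqr (R : numDomainType) (a b m : R) :
  0 <= a -> 0 <= b -> 0 <= m -> m ^+ 2 <= a * b -> 2 * m <= a + b.
Proof.
move=> a0 b0 m0 mab.
rewrite -ler_sqr ?nnegrE ?mulr_ge0 ?addr_ge0 ?ler0n // exprMn -natrX mulr_natl.
apply: le_trans (real_leif_AGM2_scaled (ger0_real a0) (ger0_real b0)).1.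
by rewrite lerMn2r mab orbT.
Qed.

Section Frobenius.
Variable C : numClosedFieldType.

Lemma adjmxE m n (A : 'M[C]_(m, n)) : adjmx A = (A ^t*)%sesqui.
Proof. by rewrite /adjmx map_trmx. Qed.

Lemma adjmxK m n (A : 'M[C]_(m, n)) : adjmx (adjmx A) = A.
Proof. by rewrite !adjmxE trmxCK. Qed.

Lemma adjmx_mul m n p (A : 'M[C]_(m, n)) (B : 'M[C]_(n, p)) :
  adjmx (A *m B) = adjmx B *m adjmx A.
Proof. by rewrite /adjmx map_mxM trmx_mul. Qed.

Definition frobdot m n (A B : 'M[C]_(m, n)) : C := \tr (A *m adjmx B).

Lemma frobdotE m n (A B : 'M[C]_(m, n)) :
  frobdot A B = \sum_i \sum_j A i j * (B i j)^*.
Proof.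
apply: eq_bigr => i _; rewrite mxE.
by apply: eq_bigr => j _; rewrite !mxE.
Qed.

Lemma frobdot_mxvec m n (A B : 'M[C]_(m, n)) :
  frobdot A B = dotmx (mxvec A) (mxvec B).
Proof.
rewrite frobdotE dotmxE mxE pair_big /=.
have [g gK Kg] := curry_mxvec_bij m n.
rewrite (reindex (fun p : 'I_m * 'I_n => mxvec_index p.1 p.2)) /=.
  by apply: eq_bigr => -[i j] _; rewrite !mxE !mxvecE.
exists g => [[i j] _|k _]; first exact: (gK (i, j)).
by have := Kg k isT; case: (g k).
Qed.

Lemma frobdot_ge0 m n (A : 'M[C]_(m, n)) : 0 <= frobdot A A.
Proof. by rewrite frobdot_mxvec dnorm_ge0. Qed.

Lemma frobdot_CauchySchwarz m n (A B : 'M[C]_(m, n)) :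
  `|frobdot A B| ^+ 2 <= frobdot A A * frobdot B B.
Proof. by rewrite !frobdot_mxvec; exact: (CauchySchwarz _ _ _).1. Qed.

Lemma frobdot_col m n (A : 'M[C]_(m, n)) :
  frobdot A A = \sum_j sqnorm (col j A).
Proof.
rewrite frobdotE exchange_big; apply: eq_bigr => j _.
by apply: eq_bigr => i _; rewrite !mxE normCK.
Qed.

Lemma sqnorm_frobdot n (v : 'cV[C]_n) : sqnorm v = frobdot v v.
Proof. by rewrite frobdot_col big_ord1 col_id. Qed.

Lemma frobdot_adjmx m n (A : 'M[C]_(m, n)) :
  frobdot (adjmx A) (adjmx A) = frobdot A A.
Proof. by rewrite /frobdot adjmxK mxtrace_mulC. Qed.

Lemma opnorm_le1_frobdot n m (Q : 'M[C]_n) (A : 'M[C]_(n, m)) :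
  opnorm_le1 Q -> frobdot (Q *m A) (Q *m A) <= frobdot A A.
Proof.
move=> hQ; rewrite !frobdot_col; apply: ler_sum => j _.
by rewrite colE -mulmxA -colE; exact: hQ.
Qed.

Lemma opnorm_le1_adjmx n (Q : 'M[C]_n) : opnorm_le1 Q -> opnorm_le1 (adjmx Q).
Proof.
move=> hQ v; rewrite !sqnorm_frobdot; set w := adjmx Q *m v.
have [w0|w_neq0] := eqVneq (frobdot w w) 0; first by rewrite w0 frobdot_ge0.
have w_gt0 : 0 < frobdot w w by rewrite lt_def w_neq0 frobdot_ge0.
have wQw : frobdot w w = frobdot v (Q *m w).
  by rewrite /frobdot adjmx_mul mulmxA [RHS]mxtrace_mulC mulmxA.
have Qw_le : frobdot (Q *m w) (Q *m w) <= frobdot w w.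
  by rewrite -!sqnorm_frobdot; exact: hQ.
(* |w|^4 = |<v, Q w>|^2 <= |v|^2 |Q w|^2 <= |v|^2 |w|^2 *)
rewrite -(ler_pM2r w_gt0) -expr2 -[X in X ^+ 2]ger0_norm ?frobdot_ge0 //.
rewrite {1}wQw; apply: le_trans (frobdot_CauchySchwarz _ _) _.
by rewrite ler_wpM2l ?frobdot_ge0.
Qed.

Lemma psdmx_factor n (X : 'M[C]_n) :
  psdmx X -> exists A : 'M[C]_n, X = adjmx A *m A.
Proof.
case=> Xh X_ge0; set P := spectralmx X; set d := spectral_diag X.
have /orthomx_spectralP eX : X \is normalmx.
  by apply/normalmxP; rewrite -adjmxE Xh.
have PP : P *m adjmx P = 1%:M by rewrite adjmxE; apply/unitarymxP/spectral_unitarymx.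
rewrite invmx_unitary ?spectral_unitarymx // -adjmxE -/P -/d in eX.
have d_ge0 i : 0 <= d 0 i.
  have -> : d 0 i = (row i P *m X *m adjmx (row i P)) 0 0.
    have -> : d 0 i = (P *m X *m adjmx P) i i.
      by rewrite eX !mulmxA PP mul1mx -mulmxA PP mulmx1 mxE eqxx mulr1n.
    by rewrite !mxE; apply: eq_bigr => k _; rewrite -row_mul !mxE.
  by have := X_ge0 (adjmx (row i P)); rewrite adjmxK.
set S := diag_mx (map_mx sqrtC d).
have Sh : adjmx S = S.
  rewrite adjmxE tr_diag_mx map_diag_mx; congr diag_mx.
  by apply/rowP => j; rewrite !mxE; apply: geC0_conj; rewrite sqrtC_ge0.
exists (S *m P); rewrite adjmx_mul Sh mulmxA -(mulmxA (adjmx P)) mulmx_diag.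
rewrite {1}eX; congr (_ *m diag_mx _ *m _).
by apply/rowP => j; rewrite !mxE -expr2 sqrtCK.
Qed.

Lemma psdmx_frobdot n (X : 'M[C]_n) : psdmx X -> frobdot X X = \tr (X *m X).
Proof. by case=> Xh _; rewrite /frobdot Xh. Qed.

Lemma psdmx_trace_mul_ge0 n (X Y : 'M[C]_n) :
  psdmx X -> psdmx Y -> 0 <= \tr (X *m Y).
Proof.
move=> /psdmx_factor[A ->] /psdmx_factor[B ->].
rewrite mulmxA mxtrace_mulC !mulmxA.
by have := frobdot_ge0 (B *m adjmx A); rewrite /frobdot adjmx_mul adjmxK !mulmxA.
Qed.

Lemma psdmx_contraction_trace_sqr n (X Y Q : 'M[C]_n) :
  psdmx X -> psdmx Y -> opnorm_le1 Q ->
  `|\tr (Q *m X *m Y)| ^+ 2 *+ 2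
    <= (\tr (X *m X) + \tr (Y *m Y)) * \tr (X *m Y).
Proof.
move=> hX hY hQ; have [A eX] := psdmx_factor hX; have [B eY] := psdmx_factor hY.
set M := B *m Q *m adjmx A; set N := B *m adjmx A.
have trM : \tr (Q *m X *m Y) = frobdot M N.
  by rewrite /frobdot adjmx_mul adjmxK eX eY !mulmxA mxtrace_mulC !mulmxA.
have trN : frobdot N N = \tr (X *m Y).
  by rewrite /frobdot adjmx_mul adjmxK eX eY !mulmxA [RHS]mxtrace_mulC !mulmxA.
have trMM : frobdot M M = frobdot (adjmx Q *m Y) (X *m adjmx Q).
  rewrite /frobdot !adjmx_mul adjmxK hX.1 eX eY !mulmxA.
  by rewrite [LHS]mxtrace_mulC !mulmxA [LHS]mxtrace_mulC !mulmxA adjmxK.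
have QY : frobdot (adjmx Q *m Y) (adjmx Q *m Y) <= \tr (Y *m Y).
  by rewrite -psdmx_frobdot //; apply/opnorm_le1_frobdot/opnorm_le1_adjmx.
have XQ : frobdot (X *m adjmx Q) (X *m adjmx Q) <= \tr (X *m X).
  rewrite -frobdot_adjmx adjmx_mul adjmxK hX.1 -psdmx_frobdot //.
  exact: opnorm_le1_frobdot.
have M2 : 2 * frobdot M M <= \tr (X *m X) + \tr (Y *m Y).
  apply: ler_AGM2_of_sqr; rewrite ?frobdot_ge0 ?psdmx_trace_mul_ge0 //.
  rewrite -[X in X ^+ 2]ger0_norm ?frobdot_ge0 // trMM.
  apply: le_trans (frobdot_CauchySchwarz _ _) _; rewrite mulrC.
  by apply: ler_pM; rewrite ?frobdot_ge0.
rewrite trM -trN -mulr_natl.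
apply: (@le_trans _ _ (2 * (frobdot M M * frobdot N N))).
  by rewrite ler_pM2l ?frobdot_CauchySchwarz.
by rewrite mulrA ler_wpM2r ?frobdot_ge0.
Qed.

End Frobenius.

Theorem lemma2 (C : numClosedFieldType) (n : nat) (X Y Q : 'M[C]_n)
  (hX : psdmx X) (hY : psdmx Y) (hQ : opnorm_le1 Q) (t : C) (ht : 0 < t) :
  4 * `|\tr (Q *m X *m Y)|
    <= t * \tr (X *m X + Y *m Y) + t^-1 * \tr (X *m Y + Y *m X).
Proof.
have XX_ge0 := psdmx_trace_mul_ge0 hX hX; have YY_ge0 := psdmx_trace_mul_ge0 hY hY.
have XY_ge0 := psdmx_trace_mul_ge0 hX hY.
have key := psdmx_contraction_trace_sqr hX hY hQ.
rewrite !mxtraceD [\tr (Y *m X)]mxtrace_mulC -mulr2n.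
have -> : 4 = 2 * 2 :> C by rewrite -natrM.
rewrite -mulrA; apply: ler_AGM2_of_sqr;
  rewrite ?mulr_ge0 ?mulrn_wge0 ?addr_ge0 ?invr_ge0 ?(ltW ht) //.
rewrite mulrACA mulfV ?gt_eqF // mul1r mulrnAr exprMn -natrX mulr_natl mulrnA.
by rewrite lerMn2r key orbT.
Qed.
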